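(* For any integers $k\ge4$ and $L\ge1$ there exists $f_{k,L}\in\mathcal{NN}_{2,1}(3k2^k+3,L)$ such that $f_{k,L}([-1,1]^2)\subseteq[-1,1]$ and \[ |f_{k,L}(x,y)-xy|\le 2^{-2kL-1}\qquad\text{for all }x,y\in[-1,1]. \]
   Context: $\mathcal{NN}_{d,k}(W,L)$: set of maps $g:\mathbb{R}^d\to\mathbb{R}^k$ given by $g_0(x)=x$, $g_{\ell+1}(x)=\sigma(A_\ell g_\ell(x)+b_\ell)$ ($\ell=0,\dots,L-1$), $g(x)=A_Lg_L(x)+b_L$, with $A_\ell\in\mathbb{R}^{N_{\ell+1}\times N_\ell}$, $b_\ell\in\mathbb{R}^{N_{\ell+1}}$, $N_0=d$, $N_{L+1}=k$, $\max\{N_1,\dots,N_L\}\le W$, $\sigma(t)=\max\{t,0\}$ componentwise. *)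

From Stdlib Require Import Reals Lra Lia List.
Open Scope R_scope.

(* Vectors in R^n are represented as functions nat -> R, only the
   coordinates 0..n-1 being meaningful; a matrix in R^{m x n} is a function
   nat -> nat -> R, only entries (i,j) with i<m, j<n being meaningful. *)

Definition relu (t : R) : R := Rmax t 0.

Record layer := mkLayer {
  l_in : nat;
  l_out : nat;
  l_A : nat -> nat -> R;
  l_b : nat -> R }.

Definition affine (l : layer) (x : nat -> R) : nat -> R :=
  fun i => if Nat.ltb i (l_out l)
           then sum_f_R0 (fun j => if Nat.ltb j (l_in l) then l_A l i j * x j else 0)
                  (l_in l) + l_b l i
           else 0.

Definition relu_layer (l : layer) (x : nat -> R) : nat -> R :=
  fun i => if Nat.ltb i (l_out l) then relu (affine l x i) else 0.

Record network := mkNet { hidden : list layer; output : layer }.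

Definition realize (N : network) (x : nat -> R) : nat -> R :=
  affine (output N) (fold_left (fun g l => relu_layer l g) (hidden N) x).

Fixpoint chain (d : nat) (ls : list layer) (last : layer) : Prop :=
  match ls with
  | nil => l_in last = d
  | l :: ls' => l_in l = d /\ chain (l_out l) ls' last
  end.

Definition in_NN (d k W L : nat) (N : network) : Prop :=
  length (hidden N) = L /\
  chain d (hidden N) (output N) /\
  l_out (output N) = k /\
  (forall l, In l (hidden N) -> (l_out l <= W)%nat).

Definition vec2 (x y : R) : nat -> R :=
  fun i => match i with 0%nat => x | 1%nat => y | _ => 0 end.

From Stdlib Require Import Reals Lra Lia List Psatz FunctionalExtensionality.
Open Scope R_scope.

(* Polarization: [xy = ((x+y)/2)^2 - ((x-y)/2)^2], so it suffices to square [u] in [[-1,1]].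
   For [w] in [[0,1]], the interpolant [I(w)] of [w^2] at the knots [i/N] satisfies
   [I(w) = w^2 + Z(w) (1 - Z(w)) / N^2], where [Z] is the sawtooth with [N] teeth; both are
   ReLU combinations of the ramps [relu (w - i/N)], and [w = |z|] costs the ramps of [z] and
   of [-z].  Keeping [u^2 = s + z^2 / N^(2l)] exact, each layer replaces [z] by [Z(|z|)] and
   adds [(I(|z|) - Z(|z|)/N^2) / N^(2l)] (which is nonnegative) to [s]; the output layer adds
   [I(|z|) / N^(2l)] instead, with error [Z (1 - Z) / N^(2L) <= 1 / (4 N^(2L))].  For
   [N = 2^k] a layer has [2 (2N + 1) <= 3k 2^k + 3] neurons. *)

Fixpoint rsum (n : nat) (f : nat -> R) : R :=
  match n with O => 0 | S n' => rsum n' f + f n' end.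

Lemma rsum_ext n f g : (forall i, (i < n)%nat -> f i = g i) -> rsum n f = rsum n g.
Proof.
  induction n; intros H; simpl; [reflexivity|].
  rewrite IHn, H; [reflexivity | lia | intros; apply H; lia].
Qed.

Lemma rsum_plus n f g : rsum n (fun i => f i + g i) = rsum n f + rsum n g.
Proof. induction n; simpl; [|rewrite IHn]; lra. Qed.

Lemma rsum_minus n f g : rsum n (fun i => f i - g i) = rsum n f - rsum n g.
Proof. induction n; simpl; [|rewrite IHn]; lra. Qed.

Lemma rsum_opp n f : rsum n (fun i => - f i) = - rsum n f.
Proof. induction n; simpl; [|rewrite IHn]; lra. Qed.

Lemma rsum_scal_l n c f : rsum n (fun i => c * f i) = c * rsum n f.
Proof. induction n; simpl; [|rewrite IHn]; ring. Qed.

Lemma rsum_add_range a b f : rsum (a + b) f = rsum a f + rsum b (fun i => f (a + i)%nat).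
Proof.
  induction b; simpl; [rewrite Nat.add_0_r; lra|].
  rewrite Nat.add_succ_r; simpl; rewrite IHb; lra.
Qed.

Lemma rsum_zero_tail n m f : (m <= n)%nat -> (forall i, (m <= i < n)%nat -> f i = 0) ->
  rsum n f = rsum m f.
Proof.
  induction n; intros Hmn H.
  - now replace m with 0%nat by lia.
  - destruct (Nat.eq_dec m (S n)) as [->|]; [reflexivity|].
    simpl; rewrite IHn, H by (lia || (intros; apply H; lia)); lra.
Qed.

(* [affine] sums one index too far and guards it; this removes the guard. *)
Lemma sum_f_R0_guard n f :
  sum_f_R0 (fun j => if Nat.ltb j n then f j else 0) n = rsum n f.
Proof.
  assert (Hall : forall m, sum_f_R0 (fun j => if Nat.ltb j n then f j else 0) m
                 = rsum (S m) (fun j => if Nat.ltb j n then f j else 0)).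
  { induction m; simpl in *; [lra | now rewrite IHm]. }
  rewrite Hall; simpl; rewrite Nat.ltb_irrefl, Rplus_0_r.
  apply rsum_ext; intros i Hi; now apply Nat.ltb_lt in Hi as ->.
Qed.

Lemma affine_eq l x i :
  affine l x i = if Nat.ltb i (l_out l)
                 then rsum (l_in l) (fun j => l_A l i j * x j) + l_b l i else 0.
Proof. unfold affine; now rewrite sum_f_R0_guard. Qed.

Lemma relu_id t : 0 <= t -> relu t = t.
Proof. intros; unfold relu; apply Rmax_left; lra. Qed.

Lemma relu_0 t : t <= 0 -> relu t = 0.
Proof. intros; unfold relu; apply Rmax_right; lra. Qed.

Lemma relu_abs z c : 0 <= c -> relu (z - c) + relu (- z - c) = relu (Rabs z - c).
Proof.
  intros Hc; destruct (Rle_dec 0 z).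
  - rewrite Rabs_right, (relu_0 (- z - c)) by lra; lra.
  - rewrite Rabs_left, (relu_0 (z - c)) by lra; lra.
Qed.

Lemma Rdiv_nonneg a b : 0 <= a -> 0 < b -> 0 <= a / b.
Proof. intros; unfold Rdiv; apply Rmult_le_pos; [lra|apply Rlt_le, Rinv_0_lt_compat; lra]. Qed.

Lemma pow_2S n l : n ^ (2 * S l) = n ^ (2 * l) * (n * n).
Proof. replace (2 * S l)%nat with (2 * l + 2)%nat by lia; rewrite pow_add; simpl; ring. Qed.

Definition pwl (N : nat) (g : nat -> R) (w : R) : R :=
  rsum N (fun i => g i * relu (w - INR i / INR N)).

Lemma pwl_scal_l N c g w : pwl N (fun i => c * g i) w = c * pwl N g w.
Proof.
  unfold pwl; rewrite <- rsum_scal_l; apply rsum_ext; intros; ring.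
Qed.

Lemma pwl_minus N g h w : pwl N (fun i => g i - h i) w = pwl N g w - pwl N h w.
Proof.
  unfold pwl; rewrite <- rsum_minus; apply rsum_ext; intros; ring.
Qed.

Lemma exists_unit_cell n t : (1 <= n)%nat -> 0 <= t <= INR n ->
  exists j, (j < n)%nat /\ INR j <= t <= INR j + 1.
Proof.
  induction n as [|n IHn]; intros Hn Ht; [lia|].
  destruct (Nat.eq_dec n 0) as [->|Hn0]; [exists 0%nat; simpl in *; split; [lia|lra]|].
  destruct (Rle_dec t (INR n)).
  - destruct IHn as [j [Hj Htj]]; [lia|lra|]; exists j; split; [lia|lra].
  - exists n; rewrite S_INR in Ht; split; [lia|lra].
Qed.

Lemma pwl_on_cell N g w j : (j < N)%nat -> INR j <= INR N * w <= INR j + 1 ->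
  pwl N g w = rsum (S j) (fun i => g i * (w - INR i / INR N)).
Proof.
  intros Hj Hw; unfold pwl.
  assert (HN : 0 < INR N) by (apply lt_0_INR; lia).
  assert (Hknot : forall i, w - INR i / INR N = (INR N * w - INR i) / INR N)
    by (intros; field; lra).
  rewrite (rsum_zero_tail N (S j)); [| lia |].
  2:{ intros i Hi.
      assert (INR (S j) <= INR i) by (apply le_INR; lia); rewrite S_INR in *.
      rewrite relu_0; [ring|]. rewrite Hknot; unfold Rdiv.
      assert (0 < / INR N) by (apply Rinv_0_lt_compat; lra); nra. }
  apply rsum_ext; intros i Hi; rewrite relu_id; [reflexivity|].
  assert (INR i <= INR j) by (apply le_INR; lia).
  rewrite Hknot; apply Rmult_le_pos; [lra|apply Rlt_le, Rinv_0_lt_compat; lra].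
Qed.

(* Slopes of the sawtooth with [N] teeth of height 1 (tent map iterated) and of the
   interpolant of [w^2] at the knots [i/N]: slope [(2j+1)/N] on cell [j]. *)
Definition saw_coef (N i : nat) : R :=
  if Nat.eqb i 0 then INR N else if Nat.even i then 2 * INR N else - (2 * INR N).

Definition sq_coef (N i : nat) : R := if Nat.eqb i 0 then / INR N else 2 / INR N.

Lemma rsum_saw_knots N w j : INR N <> 0 ->
  rsum (S j) (fun i => saw_coef N i * (w - INR i / INR N))
  = if Nat.even j then INR N * w - INR j else INR j + 1 - INR N * w.
Proof.
  intros HN; induction j as [|j IHj].
  - simpl; unfold saw_coef; simpl; field; auto.
  - change (rsum (S (S j)) ?f) with (rsum (S j) f + f (S j)); rewrite IHj.
    unfold saw_coef; simpl Nat.eqb; cbv iota.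
    rewrite Nat.even_succ, <- Nat.negb_even.
    destruct (Nat.even j); cbn [negb]; rewrite S_INR; field; auto.
Qed.

Lemma rsum_sq_knots N w j : INR N <> 0 ->
  rsum (S j) (fun i => sq_coef N i * (w - INR i / INR N))
  = ((2 * INR j + 1) * (INR N * w) - INR j * (INR j + 1)) / (INR N * INR N).
Proof.
  intros HN; induction j as [|j IHj].
  - simpl; unfold sq_coef; simpl; field; auto.
  - change (rsum (S (S j)) ?f) with (rsum (S j) f + f (S j)); rewrite IHj.
    unfold sq_coef; simpl Nat.eqb; cbv iota; rewrite S_INR; field; auto.
Qed.

Section Cell.

Variables (N : nat) (w : R).
Hypotheses (HN : (1 <= N)%nat) (Hw : 0 <= w <= 1).

Let Z := pwl N (saw_coef N) w.
Let I := pwl N (sq_coef N) w.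

(* Everything is read off on the cell [j <= N w <= j + 1], with [tau = N w - j]:
   [Z] is [tau] or [1 - tau] and [N^2 (I - w^2) = tau (1 - tau)]. *)
Lemma on_cell : exists j : nat, (j < N)%nat /\ INR j + 1 <= INR N /\
  let t := INR N * w in INR j <= t <= INR j + 1 /\
  Z = (if Nat.even j then t - INR j else INR j + 1 - t) /\
  I = ((2 * INR j + 1) * t - INR j * (INR j + 1)) / (INR N * INR N).
Proof.
  assert (HN1 : 1 <= INR N) by (apply (le_INR 1); lia).
  destruct (exists_unit_cell N (INR N * w)) as [j [Hj Ht]]; [lia|nra|].
  exists j; split; [exact Hj|split; [rewrite <- S_INR; apply le_INR; lia|]].
  split; [exact Ht|unfold Z, I].
  rewrite !(pwl_on_cell N _ w j Hj Ht), rsum_saw_knots, rsum_sq_knots by (apply not_0_INR; lia).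
  split; reflexivity.
Qed.

Lemma saw_bounds : 0 <= Z <= 1 /\ Z <= INR N * w.
Proof.
  destruct on_cell as [j [_ [_ [Ht [-> _]]]]].
  assert (0 <= INR j) by apply pos_INR.
  destruct (Nat.even j) eqn:Ev; [lra|].
  assert (1 <= INR j) by (apply (le_INR 1); destruct j; [discriminate|lia]).
  lra.
Qed.

Lemma sq_interp_le : I <= w.
Proof.
  assert (HN1 : 1 <= INR N) by (apply (le_INR 1); lia).
  destruct on_cell as [j [_ [HjN [Ht [_ ->]]]]].
  assert (0 <= INR j) by apply pos_INR.
  set (t := INR N * w) in *; set (a := INR j) in *; set (n := INR N) in *.
  apply Rmult_le_reg_r with (n * n); [nra|].
  unfold Rdiv; rewrite Rmult_assoc, Rinv_l, Rmult_1_r by nra.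
  assert (0 <= t * (n - a - 1)) by nra.
  assert (0 <= a * (a + 1 - t)) by nra.
  replace (w * (n * n)) with (t * n) by (unfold t; ring); nra.
Qed.

Lemma sq_interp_error : I = w * w + Z * (1 - Z) / (INR N * INR N).
Proof.
  assert (HN1 : 1 <= INR N) by (apply (le_INR 1); lia).
  destruct on_cell as [j [_ [_ [_ [-> ->]]]]].
  destruct (Nat.even j); field; lra.
Qed.

End Cell.

(* A hidden layer holds two blocks of [2N+1] neurons, block [false] for [u = (x+y)/2] and
   block [true] for [v = (x-y)/2]; neuron [q] of the block of state [(z, s)] is
   [relu (z - q/N)] for [q < N], [relu (- z - (q-N)/N)] for [N <= q < 2N], and [relu s]. *)
Definition block_size (N : nat) : nat := (2 * N + 1)%nat.
Definition width (N : nat) : nat := (2 * block_size N)%nat.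

Definition in_block_v (N r : nat) : bool := Nat.leb (block_size N) r.
Definition block_pos (N r : nat) : nat :=
  if in_block_v N r then (r - block_size N)%nat else r.

Definition block_neuron (N : nat) (z s : R) (q : nat) : R :=
  if Nat.ltb q N then relu (z - INR q / INR N)
  else if Nat.ltb q (2 * N) then relu (- z - INR (q - N) / INR N)
  else relu s.

Definition hidden_state (N : nat) (z s : bool -> R) (r : nat) : R :=
  if Nat.ltb r (width N)
  then block_neuron N (z (in_block_v N r)) (s (in_block_v N r)) (block_pos N r)
  else 0.

Definition knot_bias (N r : nat) : R :=
  let q := block_pos N r in
  if Nat.ltb q N then - (INR q / INR N)
  else if Nat.ltb q (2 * N) then - (INR (q - N) / INR N) else 0.

Definition block_layer (N n : nat) (rz rs : bool -> nat -> R) : layer :=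
  mkLayer n (width N)
    (fun r j => let b := in_block_v N r in let q := block_pos N r in
       if Nat.ltb q N then rz b j else if Nat.ltb q (2 * N) then - rz b j else rs b j)
    (knot_bias N).

Lemma relu_block_layer N n rz rs x :
  relu_layer (block_layer N n rz rs) x
  = hidden_state N (fun b => rsum n (fun j => rz b j * x j))
                   (fun b => rsum n (fun j => rs b j * x j)).
Proof.
  apply functional_extensionality; intros r.
  unfold relu_layer, hidden_state, block_neuron; rewrite affine_eq.
  unfold block_layer; cbn [l_out l_in l_A l_b].
  destruct (Nat.ltb r (width N)); [|reflexivity].
  unfold knot_bias; cbv zeta.
  destruct (Nat.ltb (block_pos N r) N); [f_equal; lra|].
  destruct (Nat.ltb (block_pos N r) (2 * N)); [|f_equal; lra].
  rewrite (rsum_ext _ _ (fun j => - (rz (in_block_v N r) j * x j))) by (intros; ring).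
  rewrite rsum_opp; f_equal; lra.
Qed.

Definition block_readout (N : nat) (a : R) (g : nat -> R) (q : nat) : R :=
  if Nat.ltb q N then g q else if Nat.ltb q (2 * N) then g (q - N)%nat else a.

Definition readout (N : nat) (b : bool) (a : R) (g : nat -> R) (r : nat) : R :=
  if (Nat.ltb r (width N) && Bool.eqb (in_block_v N r) b)%bool
  then block_readout N a g (block_pos N r) else 0.

Ltac case_ltb := repeat match goal with
  | |- context [Nat.ltb ?x ?y] => destruct (Nat.ltb_spec x y); try (exfalso; lia)
  | |- context [Nat.leb ?x ?y] => destruct (Nat.leb_spec x y); try (exfalso; lia)
  end.

Lemma block_readout_neuron N a g z s :
  rsum (block_size N) (fun q => block_readout N a g q * block_neuron N z s q)
  = a * relu s + pwl N g (Rabs z).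
Proof.
  unfold block_size; replace (2 * N + 1)%nat with (N + N + 1)%nat by lia.
  rewrite !rsum_add_range; simpl rsum at 3.
  rewrite (rsum_ext N (fun q => block_readout N a g (N + q) * block_neuron N z s (N + q))
             (fun q => g q * relu (- z - INR q / INR N))).
  2:{ intros q Hq; unfold block_readout, block_neuron; case_ltb.
      now replace (N + q - N)%nat with q by lia. }
  rewrite (rsum_ext N _ (fun q => g q * relu (z - INR q / INR N)))
    by (intros; unfold block_readout, block_neuron; case_ltb; reflexivity).
  unfold block_readout, block_neuron; case_ltb.
  unfold pwl; rewrite Rplus_0_l, <- rsum_plus.
  rewrite (rsum_ext N _ (fun q => g q * relu (Rabs z - INR q / INR N))); [ring|].
  intros q Hq; rewrite <- relu_abs; [ring|].
  apply Rmult_le_pos; [apply pos_INR|].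
  apply Rlt_le, Rinv_0_lt_compat, lt_0_INR; lia.
Qed.

Lemma readout_hidden_state N b a g z s :
  rsum (width N) (fun r => readout N b a g r * hidden_state N z s r)
  = a * relu (s b) + pwl N g (Rabs (z b)).
Proof.
  unfold width; replace (2 * block_size N)%nat with (block_size N + block_size N)%nat by lia.
  rewrite rsum_add_range.
  rewrite (rsum_ext _ (fun q => readout N b a g (block_size N + q)
                                * hidden_state N z s (block_size N + q))
             (fun q => (if Bool.eqb true b then block_readout N a g q else 0)
                       * block_neuron N (z true) (s true) q)).
  2:{ intros q Hq; unfold readout, hidden_state, block_pos, in_block_v, width; case_ltb.
      now replace (block_size N + q - block_size N)%nat with q by lia. }
  rewrite (rsum_ext _ _ (fun q => (if Bool.eqb false b then block_readout N a g q else 0)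
                                 * block_neuron N (z false) (s false) q))
    by (intros; unfold readout, hidden_state, block_pos, in_block_v, width;
        case_ltb; reflexivity).
  destruct b; cbn [Bool.eqb];
    rewrite block_readout_neuron, (rsum_ext _ _ (fun _ => 0 * 1)), rsum_scal_l
      by (intros; ring); ring.
Qed.

Definition polarize (x y : R) (b : bool) : R := if b then (x - y) / 2 else (x + y) / 2.

Definition input_layer (N : nat) : layer :=
  block_layer N 2 (fun b j => if b then (if Nat.eqb j 0 then / 2 else - / 2) else / 2)
                  (fun _ _ => 0).

Lemma relu_input_layer N x y :
  relu_layer (input_layer N) (vec2 x y) = hidden_state N (polarize x y) (fun _ => 0).
Proof.
  unfold input_layer; rewrite relu_block_layer; simpl rsum; unfold vec2.
  f_equal; apply functional_extensionality; intros []; unfold polarize; simpl; lra.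
Qed.

Definition step_coef (N l i : nat) : R :=
  / INR N ^ (2 * l) * (sq_coef N i - / (INR N * INR N) * saw_coef N i).

Definition out_coef (N l i : nat) : R := / INR N ^ (2 * l) * sq_coef N i.

Definition step_layer (N l : nat) : layer :=
  block_layer N (width N) (fun b => readout N b 0 (saw_coef N))
                          (fun b => readout N b 1 (step_coef N l)).

Lemma relu_step_layer N l z s :
  relu_layer (step_layer N l) (hidden_state N z s)
  = hidden_state N (fun b => pwl N (saw_coef N) (Rabs (z b)))
                   (fun b => relu (s b) + pwl N (step_coef N l) (Rabs (z b))).
Proof.
  unfold step_layer; rewrite relu_block_layer.
  f_equal; apply functional_extensionality; intros b; rewrite readout_hidden_state; ring.
Qed.

Definition output_layer (N l : nat) : layer :=
  mkLayer (width N) 1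
    (fun _ r => readout N false 1 (out_coef N l) r - readout N true 1 (out_coef N l) r)
    (fun _ => 0).

Lemma output_layer_eq N l z s :
  affine (output_layer N l) (hidden_state N z s) 0%nat
  = (relu (s false) + pwl N (out_coef N l) (Rabs (z false)))
    - (relu (s true) + pwl N (out_coef N l) (Rabs (z true))).
Proof.
  rewrite affine_eq; cbn -[width rsum].
  rewrite (rsum_ext _ _ (fun r => readout N false 1 (out_coef N l) r * hidden_state N z s r
                                  - readout N true 1 (out_coef N l) r * hidden_state N z s r))
    by (intros; ring).
  rewrite rsum_minus, !readout_hidden_state; ring.
Qed.

Fixpoint sq_state (N : nat) (u : R) (l : nat) : R * R :=
  match l with
  | O => (u, 0)
  | S l' => (pwl N (saw_coef N) (Rabs (fst (sq_state N u l'))),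
             relu (snd (sq_state N u l')) + pwl N (step_coef N l') (Rabs (fst (sq_state N u l'))))
  end.

Definition sq_approx (N : nat) (u : R) (l : nat) : R :=
  relu (snd (sq_state N u l)) + pwl N (out_coef N l) (Rabs (fst (sq_state N u l))).

Definition mlp (N L : nat) : network :=
  mkNet (input_layer N :: map (step_layer N) (seq 0 (L - 1)))
        (output_layer N (L - 1)).

Lemma fold_step_layers N u s n :
  fold_left (fun g l => relu_layer l g) (map (step_layer N) (seq s n))
    (hidden_state N (fun b => fst (sq_state N (u b) s)) (fun b => snd (sq_state N (u b) s)))
  = hidden_state N (fun b => fst (sq_state N (u b) (s + n)))
                   (fun b => snd (sq_state N (u b) (s + n))).
Proof.
  revert s; induction n as [|n IHn]; intros s; [now rewrite Nat.add_0_r|].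
  simpl; rewrite relu_step_layer, Nat.add_succ_r.
  exact (IHn (S s)).
Qed.

Lemma realize_mlp N L x y :
  realize (mlp N L) (vec2 x y) 0%nat
  = sq_approx N ((x + y) / 2) (L - 1) - sq_approx N ((x - y) / 2) (L - 1).
Proof.
  unfold realize, mlp; cbn [hidden output fold_left].
  rewrite relu_input_layer.
  change (hidden_state N (polarize x y) (fun _ => 0)) with
    (hidden_state N (fun b => fst (sq_state N (polarize x y b) 0))
                    (fun b => snd (sq_state N (polarize x y b) 0))).
  rewrite fold_step_layers, output_layer_eq; reflexivity.
Qed.

Lemma mlp_in_NN N L : (1 <= L)%nat ->
  in_NN 2 1 (width N) L (mlp N L).
Proof.
  intros HL; unfold in_NN, mlp; cbn [hidden output]; split; [|split; [|split]].
  - simpl length; rewrite length_map, length_seq; lia.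
  - split; [reflexivity|].
    induction (seq 0 (L - 1)); simpl; auto.
  - reflexivity.
  - intros l [<-|Hl]; [reflexivity|].
    apply in_map_iff in Hl as [m [<- _]]; reflexivity.
Qed.

Section Squaring.

Variables (N : nat) (u : R).
Hypotheses (HN : (1 <= N)%nat) (Hu : Rabs u <= 1).

Lemma sq_state_invariant l :
  let z := fst (sq_state N u l) in let s := snd (sq_state N u l) in
  0 <= s /\ Rabs z <= 1 /\ u * u = s + z * z / INR N ^ (2 * l)
  /\ s + Rabs z / INR N ^ (2 * l) <= 1.
Proof.
  assert (Hn : 1 <= INR N) by (apply (le_INR 1); lia).
  induction l as [|l IHl]; cbv zeta.
  - simpl; repeat split; [lra|lra|field|lra].
  - destruct IHl as [Hs [Hz [Hu2 Hb]]].
    cbn [sq_state fst snd]; rewrite pow_2S.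
    set (z := fst (sq_state N u l)) in *; set (s := snd (sq_state N u l)) in *.
    set (P := INR N ^ (2 * l)) in *; set (w := Rabs z) in *.
    assert (HP : 0 < P) by (apply pow_lt; lra).
    assert (Hw : 0 <= w <= 1) by (split; [apply Rabs_pos|lra]).
    unfold step_coef; fold P; rewrite pwl_scal_l, pwl_minus, pwl_scal_l, relu_id by lra.
    destruct (saw_bounds N w HN Hw) as [HZ HZw].
    assert (HIw := sq_interp_le N w HN Hw); assert (HI := sq_interp_error N w HN Hw).
    set (Z := pwl N (saw_coef N) w) in *; set (I := pwl N (sq_coef N) w) in *.
    set (n := INR N) in *; rewrite (Rabs_right Z) by lra.
    assert (Hgain : 0 <= I - / (n * n) * Z).
    { replace (I - / (n * n) * Z) with ((n * w - Z) * (n * w + Z) / (n * n))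
        by (rewrite HI; field; lra).
      apply Rdiv_nonneg; nra. }
    assert (0 <= / P * (I - / (n * n) * Z))
      by (apply Rmult_le_pos; [apply Rlt_le, Rinv_0_lt_compat|]; lra).
    assert (I / P <= w / P) by (apply Rmult_le_compat_r; [apply Rlt_le, Rinv_0_lt_compat|]; lra).
    repeat split; [lra|lra| |].
    + rewrite Hu2, (Rsqr_abs z : z * z = w * w), HI; field; lra.
    + replace (s + / P * (I - / (n * n) * Z) + Z / (P * (n * n))) with (s + I / P)
        by (field; lra); lra.
Qed.

Lemma sq_approx_bounds l :
  sq_approx N u l <= 1 /\ 0 <= sq_approx N u l - u * u <= / (4 * INR N ^ (2 * S l)).
Proof.
  assert (Hn : 1 <= INR N) by (apply (le_INR 1); lia).
  destruct (sq_state_invariant l) as [Hs [Hz [Hu2 Hb]]]; cbv zeta in *.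
  unfold sq_approx, out_coef; rewrite pow_2S, pwl_scal_l, relu_id by lra.
  set (z := fst (sq_state N u l)) in *; set (s := snd (sq_state N u l)) in *.
  set (P := INR N ^ (2 * l)) in *; set (w := Rabs z) in *.
  assert (HP : 0 < P) by (apply pow_lt; lra).
  assert (Hw : 0 <= w <= 1) by (split; [apply Rabs_pos|lra]).
  destruct (saw_bounds N w HN Hw) as [HZ _].
  assert (HIw := sq_interp_le N w HN Hw); assert (HI := sq_interp_error N w HN Hw).
  set (Z := pwl N (saw_coef N) w) in *; set (I := pwl N (sq_coef N) w) in *.
  set (n := INR N) in *.
  assert (I / P <= w / P) by (apply Rmult_le_compat_r; [apply Rlt_le, Rinv_0_lt_compat|]; lra).
  split; [replace (/ P * I) with (I / P) by (unfold Rdiv; ring); lra|].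
  replace (s + / P * I - u * u) with (Z * (1 - Z) / (P * (n * n))).
  2:{ rewrite Hu2, (Rsqr_abs z : z * z = w * w), HI; field; lra. }
  assert (Hpos : 0 < P * (n * n)) by (apply Rmult_lt_0_compat; nra).
  split; [apply Rdiv_nonneg; [apply Rmult_le_pos|]; lra|].
  replace (/ (4 * (P * (n * n)))) with ((1 / 4) / (P * (n * n))) by (field; split; lra).
  apply Rmult_le_compat_r; [apply Rlt_le, Rinv_0_lt_compat; lra|].
  assert (H2Z := Rle_0_sqr (2 * Z - 1)); unfold Rsqr in H2Z; lra.
Qed.

End Squaring.

Lemma in_NN_mono d k W W' L N : (W <= W')%nat -> in_NN d k W L N -> in_NN d k W' L N.
Proof.
  intros HW [Hlen [Hch [Hout Hwid]]]; repeat split; auto.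
  intros l Hl; specialize (Hwid l Hl); lia.
Qed.

Lemma mlp_approx_product N L x y : (1 <= N)%nat -> (1 <= L)%nat ->
  -1 <= x <= 1 -> -1 <= y <= 1 ->
  -1 <= realize (mlp N L) (vec2 x y) 0%nat <= 1 /\
  Rabs (realize (mlp N L) (vec2 x y) 0%nat - x * y) <= / (4 * INR N ^ (2 * L)).
Proof.
  intros HN HL Hx Hy; rewrite realize_mlp.
  destruct (sq_approx_bounds N ((x + y) / 2) HN) with (L - 1)%nat as [Hu1 Hu2];
    [apply Rabs_le; lra|].
  destruct (sq_approx_bounds N ((x - y) / 2) HN) with (L - 1)%nat as [Hv1 Hv2];
    [apply Rabs_le; lra|].
  replace (S (L - 1)) with L in * by lia.
  assert (H0u := Rle_0_sqr ((x + y) / 2)); assert (H0v := Rle_0_sqr ((x - y) / 2)).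
  unfold Rsqr in *.
  replace (x * y) with ((x + y) / 2 * ((x + y) / 2) - (x - y) / 2 * ((x - y) / 2)) by field.
  split; [lra|apply Rabs_le; lra].
Qed.

Theorem mainTheorem9 (k L : nat) (hk : (4 <= k)%nat) (hL : (1 <= L)%nat) :
  exists N : network,
    in_NN 2 1 (3 * k * 2 ^ k + 3) L N /\
    (forall x y, -1 <= x <= 1 -> -1 <= y <= 1 ->
       -1 <= realize N (vec2 x y) 0%nat <= 1) /\
    (forall x y, -1 <= x <= 1 -> -1 <= y <= 1 ->
       Rabs (realize N (vec2 x y) 0%nat - x * y)
         <= / 2 ^ (2 * k * L + 1)).
Proof.
  assert (HN : (1 <= 2 ^ k)%nat) by (apply Nat.le_succ_l, Nat.neq_0_lt_0, Nat.pow_nonzero; lia).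
  assert (Herr : / (4 * INR (2 ^ k) ^ (2 * L)) <= / 2 ^ (2 * k * L + 1)).
  { rewrite pow_INR, <- pow_mult, pow_add, pow_1; change (INR 2) with 2.
    replace (k * (2 * L))%nat with (2 * k * L)%nat by lia.
    assert (0 < 2 ^ (2 * k * L)) by (apply pow_lt; lra).
    apply Rinv_le_contravar; lra. }
  exists (mlp (2 ^ k) L); split; [|split].
  - apply in_NN_mono with (width (2 ^ k)); [|now apply mlp_in_NN].
    unfold width, block_size.
    assert (4 * 2 ^ k <= 3 * k * 2 ^ k)%nat by (apply Nat.mul_le_mono_r; lia); lia.
  - intros x y Hx Hy; now apply mlp_approx_product.
  - intros x y Hx Hy; eapply Rle_trans; [now apply mlp_approx_product|exact Herr].
Qed.
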